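(* Let $(\lambda_k,\Gamma_k,\Theta_k)_{k\in\mathbb N}$ be a sequence in $\mathcal C_2$ with $\lim_{k\to\infty}\lambda_k=0$. Then it is not an infimizing sequence for $\tilde J$ on $\mathcal C_2$, i.e. $\tilde J(\lambda_k,\Gamma_k,\Theta_k)$ does not converge to $\inf_{\mathcal C_2}\tilde J$.
   Context: Notation: $\mathbf Q_n$ real symmetric $n\times n$ matrices; $\mathbf D_n$ diagonal matrices; $\mathbf M_n$ symmetric matrices with zero diagonal; $|\cdot|$ the determinant. $\hat\Sigma\in\mathbf Q_n$, $\hat\Sigma\succ0$. Let $\chi$ be the map keeping off-diagonal entries and zeroing the diagonal, $\delta_{max}:=\log|[\hat\Sigma^{-1}-\chi(\hat\Sigma^{-1})]\hat\Sigma|$, and assume $0<\delta<\delta_{max}$. Define $$\tilde J(\lambda,\Gamma,\Theta):=\lambda\Big(-\log\big|\hat\Sigma^{-1}+\lambda^{-1}(\chi(\Theta)-\Gamma)\big|-\log|\hat\Sigma|+\delta\Big),$$ $$\mathcal C_2:=\{(\lambda,\Gamma,\Theta):\ \lambda>0,\ I+\Gamma-\Theta\succeq0,\ \Gamma\succeq0,\ \Gamma\in\mathbf D_n,\ \Theta\in\mathbf M_n,\ \hat\Sigma^{-1}+\lambda^{-1}(\Theta-\Gamma)\succ0\}$$ (on $\mathcal C_2$, $\chi(\Theta)=\Theta$). *)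

From HB Require Import structures.
From mathcomp Require Import all_boot all_fingroup.
From Stdlib Require Import Reals ClassicalEpsilon.
Set Implicit Arguments. Unset Strict Implicit. Unset Printing Implicit Defensive.

Local Open Scope R_scope.

HB.instance Definition _ := Monoid.isComLaw.Build R 0 Rplus
  (fun a b c => Logic.eq_sym (Rplus_assoc a b c)) Rplus_comm Rplus_0_l.
HB.instance Definition _ := Monoid.isComLaw.Build R 1 Rmult
  (fun a b c => Logic.eq_sym (Rmult_assoc a b c)) Rmult_comm Rmult_1_l.

Definition Mat (n : nat) := 'I_n -> 'I_n -> R.

Definition mzero {n} : Mat n := fun _ _ => 0.
Definition mid {n} : Mat n := fun i j => if i == j then 1 else 0.
Definition madd {n} (A B : Mat n) : Mat n := fun i j => A i j + B i j.
Definition msub {n} (A B : Mat n) : Mat n := fun i j => A i j - B i j.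
Definition mscale {n} (c : R) (A : Mat n) : Mat n := fun i j => c * A i j.
Definition mmul {n} (A B : Mat n) : Mat n :=
  fun i j => \big[Rplus/0]_(k < n) (A i k * B k j).

Definition mdet {n} (A : Mat n) : R :=
  \big[Rplus/0]_(s : 'S_n)
     ((-1) ^ (odd_perm s) * \big[Rmult/1]_(i < n) A i (s i)).

Definition minv {n} (A : Mat n) : Mat n :=
  epsilon (inhabits mzero) (fun B => mmul A B = mid /\ mmul B A = mid).

Definition symmetric {n} (A : Mat n) : Prop := forall i j, A i j = A j i.
Definition is_diag {n} (A : Mat n) : Prop := forall i j, i <> j -> A i j = 0.
Definition is_M {n} (A : Mat n) : Prop := symmetric A /\ forall i, A i i = 0.

Definition chi {n} (A : Mat n) : Mat n := fun i j => if i == j then 0 else A i j.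

Definition qform {n} (A : Mat n) (x : 'I_n -> R) : R :=
  \big[Rplus/0]_(i < n) \big[Rplus/0]_(j < n) (x i * A i j * x j).

Definition psd {n} (A : Mat n) : Prop :=
  symmetric A /\ forall x, 0 <= qform A x.
Definition pd {n} (A : Mat n) : Prop :=
  symmetric A /\ forall x, (exists i, x i <> 0) -> 0 < qform A x.

Definition delta_max {n} (S : Mat n) : R :=
  ln (mdet (mmul (msub (minv S) (chi (minv S))) S)).

Definition Jt {n} (S : Mat n) (delta lam : R) (Gam Th : Mat n) : R :=
  lam * (- ln (mdet (madd (minv S) (mscale (/ lam) (msub (chi Th) Gam))))
         - ln (mdet S) + delta).

Definition C2 {n} (S : Mat n) (lam : R) (Gam Th : Mat n) : Prop :=
  0 < lam /\ psd (msub (madd mid Gam) Th) /\ psd Gam /\ is_diag Gam /\ is_M Th /\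
  pd (madd (minv S) (mscale (/ lam) (msub Th Gam))).

(* A sequence in C_2 is infimizing for Jt on C_2 iff Jt along it converges to
   inf_{C_2} Jt (possibly -infinity).  Since the sequence lies in C_2, its values
   are >= the infimum, so this amounts to: every level r exceeding the infimum
   (i.e. exceeded by some value of Jt on C_2) is eventually an upper bound. *)
Definition infimizing {n} (S : Mat n) (delta : R)
  (lam : nat -> R) (Gam Th : nat -> Mat n) : Prop :=
  forall r : R,
    (exists l G T, C2 S l G T /\ Jt S delta l G T < r) ->
    exists N, forall k, (N <= k)%nat -> Jt S delta (lam k) (Gam k) (Th k) < r.

(* On C2 the matrix A = S^-1 + (Theta - Gamma)/lambda is positive definite and, as
   Gamma >= 0 and Theta has zero diagonal, its diagonal is dominated by that of S^-1.
   Hence all entries of A, and so det A, are bounded in terms of S alone, which gives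
   Jt >= - lambda K; along a sequence with lambda_k -> 0 the values of Jt thus cannot
   stay below any negative level.  But Jt is negative somewhere on C2: for Gamma = 0,
   Theta = - lambda chi(S^-1) and lambda small, A is the diagonal part of S^-1 and
   Jt = lambda (delta - delta_max) < 0. *)

From Pilot Require Import Defs.
From Stdlib Require Import Reals FunctionalExtensionality ClassicalEpsilon Classical.
From mathcomp Require Import all_boot all_order all_fingroup all_algebra.
From mathcomp Require Import Rstruct ring lra.
Import GRing.Theory Num.Theory Order.TTheory.
Set Implicit Arguments. Unset Strict Implicit. Unset Printing Implicit Defensive.
Local Open Scope ring_scope.

Ltac R_to_ring := rewrite ?RplusE ?RmultE ?RminusE ?RoppE ?RinvE ?R0E ?R1E.

Section Matrices.
Variable n : nat.
Implicit Types (A B : Mat n) (x : 'I_n -> R).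

Definition mx_of A : 'M[R]_n := \matrix_(i, j) A i j.

Lemma mx_ofE A i j : mx_of A i j = A i j.
Proof. by rewrite mxE. Qed.

Lemma mx_of_inj : injective mx_of.
Proof.
move=> A B eqAB; apply: functional_extensionality => i.
apply: functional_extensionality => j.
by rewrite -(mx_ofE A) -(mx_ofE B) eqAB.
Qed.

Lemma midE (i j : 'I_n) : @mid n i j = (i == j)%:R.
Proof. by rewrite /mid; case: (i == j). Qed.

Lemma mx_of_mid : mx_of mid = 1%:M.
Proof. by apply/matrixP => i j; rewrite !mxE midE. Qed.

Lemma mx_of_mmul A B : mx_of (mmul A B) = mx_of A *m mx_of B.
Proof.
apply/matrixP => i j; rewrite !mxE; apply: eq_bigr => k _; by rewrite !mxE.
Qed.

Lemma mx_of_tr A : Defs.symmetric A -> (mx_of A)^T = mx_of A.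
Proof. by move=> symA; apply/matrixP => i j; rewrite !mxE symA. Qed.

Lemma mdetE A : mdet A = \det (mx_of A).
Proof.
apply: eq_bigr => s _; congr (_ * _).
  by case: (odd_perm s); rewrite /= ?expr1 ?expr0 // Rmult_1_r.
by apply: eq_bigr => i _; rewrite mxE.
Qed.

Lemma qform_rowE A (v : 'rV[R]_n) :
  qform A (fun k => v 0 k) = \sum_(l < n) (v *m mx_of A) 0 l * v 0 l.
Proof.
rewrite /qform exchange_big /=; apply: eq_bigr => l _.
by rewrite mxE mulr_suml; apply: eq_bigr => k _; rewrite mx_ofE.
Qed.

Lemma sum_mul_delta (f : 'I_n -> R) i : \sum_(l < n) f l * (l == i)%:R = f i.
Proof.
rewrite (bigD1 i) //= eqxx mulr1 big1 ?addr0 // => l /negbTE ->.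
by rewrite mulr0.
Qed.

Lemma qform_pair A i j a b :
  qform A (fun k => a * (k == i)%:R + b * (k == j)%:R) =
  a * (a * A i i + b * A i j) + b * (a * A j i + b * A j j).
Proof.
have sum_pair (g : 'I_n -> R) :
    \sum_(l < n) g l * (a * (l == i)%:R + b * (l == j)%:R) = a * g i + b * g j.
  under eq_bigr do rewrite mulrDr mulrCA [g _ * (b * _)]mulrCA.
  by rewrite big_split /= -!mulr_sumr !sum_mul_delta.
rewrite /qform -(sum_pair (fun k => a * A k i + b * A k j)).
apply: eq_bigr => k _.
rewrite (sum_pair (fun l => (a * (k == i)%:R + b * (k == j)%:R) * A k l)) /=.
ring.
Qed.

Lemma qform_mid x : qform mid x = \sum_(i < n) x i ^+ 2.
Proof.
apply: eq_bigr => i _; under eq_bigr do rewrite midE.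
rewrite (bigD1 i) //= eqxx big1 => [|j /negbTE]; R_to_ring.
  by rewrite mulr1 addr0 expr2.
by rewrite eq_sym => ->; rewrite mulr0 mul0r.
Qed.

Lemma qform_addZ A B a x :
  qform (fun i j => A i j + a * B i j) x = qform A x + a * qform B x.
Proof.
rewrite /qform mulr_sumr -big_split; apply: eq_bigr => i _.
rewrite mulr_sumr -big_split; apply: eq_bigr => j _; R_to_ring.
change (x i * (A i j + a * B i j) * x j = x i * A i j * x j + a * (x i * B i j * x j)).
ring.
Qed.

Lemma qform_ge A c x : (forall i j, `|A i j| <= c) ->
  - (c * n%:R) * \sum_(i < n) x i ^+ 2 <= qform A x.
Proof.
move=> Ac.
have entry_ge i j : - (c / 2) * (x i ^+ 2 + x j ^+ 2) <= x i * A i j * x j.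
  have /andP [h1 h2] : - c <= A i j <= c by rewrite -ler_norml.
  have e1 : 0 <= (c + A i j) * (x i + x j) ^+ 2 by rewrite mulr_ge0 ?sqr_ge0 //; lra.
  have e2 : 0 <= (c - A i j) * (x i - x j) ^+ 2 by rewrite mulr_ge0 ?sqr_ge0 //; lra.
  nra.
apply: le_trans (ler_sum _ (fun i _ => ler_sum _ (fun j _ => entry_ge i j))).
under [X in _ <= X]eq_bigr do rewrite -mulr_sumr big_split /= sumr_const card_ord.
rewrite -mulr_sumr big_split /= sumr_const card_ord !sumrMnl -mulr_natr.
set s := \sum_(i < n) x i ^+ 2.
by rewrite le_eqVlt; apply/orP; left; apply/eqP; field.
Qed.

Lemma psd_diag_ge0 A i : psd A -> 0 <= A i i.
Proof.
case=> _ /(_ (fun k => 1 * (k == i)%:R + 0 * (k == i)%:R)) /RleP.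
by rewrite qform_pair !mul0r !mul1r !addr0.
Qed.

Lemma pd_diag_gt0 A i : pd A -> 0 < A i i.
Proof.
case=> _ /(_ (fun k => 1 * (k == i)%:R + 0 * (k == i)%:R)).
rewrite qform_pair !mul0r !mul1r !addr0 => pos; apply/RltP/pos.
by exists i; rewrite eqxx mul0r addr0 mul1r; apply/eqP; exact: oner_neq0.
Qed.

Lemma pd_entry_le A c : pd A -> (forall i, A i i <= c) -> forall i j, `|A i j| <= c.
Proof.
move=> pdA Ac i j; have [<-|neq_ij] := eqVneq i j.
  by rewrite ger0_norm ?Ac // ltW // pd_diag_gt0.
have symA : A j i = A i j by case: pdA => symA _; rewrite symA.
have pair_gt0 b : b ^+ 2 = 1 -> 0 < A i i + A j j + 2 * b * A i j.
  move=> b2; case: (pdA) => _ /(_ (fun k => 1 * (k == i)%:R + b * (k == j)%:R)).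
  rewrite qform_pair symA => pos.
  have -> : A i i + A j j + 2 * b * A i j
      = 1 * (1 * A i i + b * A i j) + b * (1 * A i j + b * A j j).
    rewrite {1}(_ : A j j = b ^+ 2 * A j j); first ring.
    by rewrite b2 mul1r.
  apply/RltP/pos; exists i; rewrite eqxx (negbTE neq_ij) mulr1 mulr0 addr0.
  by apply/eqP; exact: oner_neq0.
have := pair_gt0 1 (expr1n _ _); have := pair_gt0 (-1) ltac:(by rewrite sqrrN expr1n).
have := Ac i; have := Ac j; rewrite ler_norml; lra.
Qed.

Lemma pd_unitmx A : pd A -> mx_of A \in unitmx.
Proof.
move=> [_ posA]; rewrite unitmxE unitfE; apply/negP => /det0P [v v_neq0 vA0].
have : 0 < qform A (fun k => v 0 k).
  apply/RltP/posA; apply: NNPP => v0; move/eqP: v_neq0; apply.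
  apply/matrixP => i j; rewrite ord1 mxE; apply: NNPP => vj; apply: v0; by exists j.
rewrite qform_rowE vA0 big1 ?ltxx // => l _; by rewrite mxE mul0r.
Qed.

Lemma mx_of_minv A : pd A ->
  mx_of A *m mx_of (minv A) = 1%:M /\ mx_of (minv A) *m mx_of A = 1%:M.
Proof.
move=> pdA; rewrite -!mx_of_mmul -mx_of_mid.
suff [-> ->] : mmul A (minv A) = mid /\ mmul (minv A) A = mid by [].
apply: (epsilon_spec (inhabits mzero) (fun B => mmul A B = mid /\ mmul B A = mid)).
have A_unit := pd_unitmx pdA.
pose V : Mat n := fun i j => invmx (mx_of A) i j.
have mx_of_V : mx_of V = invmx (mx_of A) by apply/matrixP => i j; rewrite mx_ofE.
by exists V; split; apply: mx_of_inj; rewrite mx_of_mmul mx_of_V mx_of_mid ?mulmxV ?mulVmx.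
Qed.

Lemma minv_sym A : pd A -> Defs.symmetric (minv A).
Proof.
move=> pdA; have [AV VA] := mx_of_minv pdA.
have trV : (mx_of (minv A))^T = mx_of (minv A).
  have VtA : (mx_of (minv A))^T *m mx_of A = 1%:M.
    by rewrite -(mx_of_tr pdA.1) -trmx_mul AV trmx1.
  by rewrite -[LHS]mulmx1 -AV mulmxA VtA mul1mx.
by move=> i j; rewrite -(mx_ofE (minv A) i j) -trV mxE mx_ofE.
Qed.

(* The i-th row u of A^-1 satisfies u A u^T = (A^-1)_ii. *)
Lemma minv_diag_gt0 A i : pd A -> 0 < minv A i i.
Proof.
move=> pdA; have [_ VA] := mx_of_minv pdA.
set u := row i (mx_of (minv A)).
have -> : minv A i i = qform A (fun k => u 0 k).
  rewrite qform_rowE /u -row_mul VA.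
  under eq_bigr do rewrite !mxE eq_sym mulrC.
  by rewrite sum_mul_delta.
apply/RltP/pdA.2; apply: NNPP => u0.
have : (mx_of (minv A) *m mx_of A) i i = 0.
  rewrite mxE big1 // => k _; rewrite mx_ofE.
  have -> : minv A i k = 0 by apply: NNPP => uk; apply: u0; exists k; rewrite /u !mxE.
  by rewrite mul0r.
by rewrite VA mxE eqxx; apply/eqP; exact: oner_neq0.
Qed.

Lemma mdet_le A c : (forall i j, `|A i j| <= c) -> `|mdet A| <= c ^+ n *+ n`!.
Proof.
move=> Ac; rewrite -card_Sn -sumr_const mdetE.
apply: le_trans (ler_norm_sum _ _ _) _; apply: ler_sum => s _.
rewrite normrM normr_sign mul1r normr_prod.
have -> : c ^+ n = \prod_(i < n) c by rewrite prodr_const card_ord.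
by apply: ler_prod => i _; rewrite normr_ge0 mx_ofE Ac.
Qed.

Definition diag_part A : Mat n := fun i j => if i == j then A i i else 0.

Lemma pd_diag_part A : (forall i, 0 < A i i) -> pd (diag_part A).
Proof.
move=> Apos; split=> [i j|x [i0 xi0]]; first by rewrite /diag_part eq_sym; case: eqVneq => [->|].
have -> : qform (diag_part A) x = \sum_(i < n) A i i * x i ^+ 2.
  apply: eq_bigr => i _; rewrite (bigD1 i) //= /diag_part eqxx big1 => [|j /negbTE].
    by R_to_ring; rewrite addr0; ring.
  by rewrite eq_sym => ->; R_to_ring; rewrite mulr0 mul0r.
apply/RltP; rewrite (bigD1 i0) //=; apply: ltr_pwDl.
  by rewrite mulr_gt0 // exprn_even_gt0 //; apply/eqP.
by apply: sumr_ge0 => k _; rewrite mulr_ge0 ?sqr_ge0 // ltW.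
Qed.

Lemma mdet_diag_part A : mdet (diag_part A) = \prod_(i < n) A i i.
Proof.
rewrite mdetE (_ : mx_of _ = diag_mx (\row_i A i i)) ?det_diag.
  by apply: eq_bigr => i _; rewrite mxE.
apply/matrixP => i j; rewrite !mxE /diag_part.
by case: eqVneq => [->|]; rewrite ?mulr1n ?mulr0n.
Qed.

Lemma msub_chi A : msub A (chi A) = diag_part A.
Proof.
apply: functional_extensionality => i; apply: functional_extensionality => j.
by rewrite /msub /chi /diag_part; case: eqVneq => [->|]; R_to_ring; rewrite ?subr0 ?subrr.
Qed.

Definition abs_sum A := \sum_(i < n) \sum_(j < n) `|A i j|.

Lemma norm_le_abs_sum A i j : `|A i j| <= abs_sum A.
Proof.
rewrite /abs_sum (bigD1 i) //= (bigD1 j) //= -addrA lerDl.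
by rewrite addr_ge0 ?sumr_ge0 // => k _; rewrite ?sumr_ge0.
Qed.

(* Entries of B bounded by c make B >= -(c n) I, so I + l B stays psd for small l. *)
Lemma psd_mid_addZ B c l : Defs.symmetric B -> (forall i j, `|B i j| <= c) ->
  0 <= l -> l * (c * n%:R) <= 1 -> psd (fun i j => mid i j + l * B i j).
Proof.
move=> symB Bc l_ge0 small_l; split=> [i j|x]; first by rewrite !midE eq_sym symB.
apply/RleP; rewrite qform_addZ qform_mid.
have := ler_wpM2l l_ge0 (qform_ge x Bc).
set s := \sum_(i < n) x i ^+ 2; set lc := l * (c * n%:R).
have -> : l * (- (c * n%:R) * s) = - (lc * s) by rewrite /lc; ring.
have : 0 <= (1 - lc) * s by rewrite mulr_ge0 ?subr_ge0 ?sumr_ge0 // => i _; exact: sqr_ge0.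
rewrite mulrBl mul1r; R_to_ring; lra.
Qed.

End Matrices.

(* Stdlib's [ln] is 0 on nonpositive arguments, hence the hypothesis [1 <= y]. *)
Lemma ln_le_ln x y : x <= y -> 1 <= y -> ln x <= ln y.
Proof.
move=> le_xy y_ge1.
have ln_mono a b : 0 < a -> a <= b -> ln a <= ln b.
  move=> a_gt0 le_ab; have [->//|neq_ab] := eqVneq a b.
  apply/RleP/Rlt_le/ln_increasing; apply/RltP => //.
  by rewrite lt_neqAle neq_ab.
have [x_gt0|x_le0] := ltP 0 x; first exact: ln_mono.
rewrite [ln x]/ln; case: Rlt_dec => [x_gt0|_].
  by move/RltP: (x_gt0); rewrite ltNge x_le0.
by rewrite -ln_1; apply: ln_mono.
Qed.

Lemma ln_gt0 x : 0 < ln x -> 1 < x.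
Proof.
have [x_gt0 ln_gt0|x_le0] := ltP 0 x.
  by apply/RltP/ln_lt_inv; rewrite ?ln_1; apply/RltP.
rewrite /ln; case: Rlt_dec => [x_gt0|_]; last by rewrite ltxx.
by move/RltP: (x_gt0); rewrite ltNge x_le0.
Qed.

Lemma chi_id n (T : Mat n) : is_M T -> chi T = T.
Proof.
move=> [_ T_diag]; apply: functional_extensionality => i.
apply: functional_extensionality => j.
by rewrite /chi; case: eqVneq => [->|]; rewrite ?T_diag.
Qed.

Section Objective.
Variables (n : nat) (S : Mat n).

Definition Jt_floor := ln (1 + abs_sum (minv S) ^+ n *+ n`!) + `|ln (mdet S)|.

Lemma Jt_ge (delta l : R) (G T : Mat n) : 0 <= delta -> C2 S l G T ->
  - (l * Jt_floor) <= Jt S delta l G T.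
Proof.
move=> delta_ge0 [/RltP l_gt0 [_ [psdG [_ [MT pdA]]]]].
rewrite /Jt (chi_id MT); set A := madd _ _ in pdA *.
set c := abs_sum (minv S).
have A_diag i : A i i <= c.
  rewrite /A /madd /mscale /msub MT.2; R_to_ring.
  have := le_trans (ler_norm _) (norm_le_abs_sum (minv S) i i).
  have : 0 <= l^-1 * G i i by rewrite mulr_ge0 ?psd_diag_ge0 ?invr_ge0 ?ltW.
  rewrite -/c; lra.
have detA_le : `|mdet A| <= c ^+ n *+ n`! := mdet_le (pd_entry_le pdA A_diag).
have ln_detA_le : ln (mdet A) <= ln (1 + c ^+ n *+ n`!).
  apply: ln_le_ln; R_to_ring; have := normr_ge0 (mdet A);
    by have := le_trans (ler_norm _) detA_le; lra.
rewrite /Jt_floor -/c; R_to_ring; rewrite -mulrN ler_pM2l //.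
have := ler_norm (ln (mdet S)); move: ln_detA_le; R_to_ring; lra.
Qed.

Definition chi_witness l : Mat n := mscale (- l) (chi (minv S)).

Lemma is_M_chi_witness l : pd S -> is_M (chi_witness l).
Proof.
move=> pdS; split=> [i j|i]; rewrite /chi_witness /mscale /chi.
  by rewrite eq_sym minv_sym.
by rewrite eqxx; R_to_ring; rewrite mulr0.
Qed.

Lemma madd_chi_witness l : l != 0 ->
  madd (minv S) (mscale (/ l) (msub (chi_witness l) mzero)) = diag_part (minv S).
Proof.
move=> l_neq0; apply: functional_extensionality => i.
apply: functional_extensionality => j.
rewrite /madd /mscale /msub /chi_witness /mscale /chi /diag_part /mzero.
case: eqVneq => [->|_]; R_to_ring; first by rewrite mulr0 subr0 mulr0 addr0.
by field.
Qed.

Lemma C2_chi_witness l : pd S -> 0 < l -> l * (abs_sum (minv S) * n%:R) <= 1 ->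
  C2 S l mzero (chi_witness l).
Proof.
move=> pdS l_gt0 small_l; split; first exact/RltP.
split.
  have -> : msub (madd mid mzero) (chi_witness l) = fun i j => mid i j + l * chi (minv S) i j.
    apply: functional_extensionality => i; apply: functional_extensionality => j.
    by rewrite /msub /madd /mzero /chi_witness /mscale; R_to_ring; ring.
  apply: psd_mid_addZ small_l; last exact: ltW.
    by move=> i j; rewrite /chi eq_sym minv_sym.
  move=> i j; apply: le_trans (norm_le_abs_sum (minv S) i j).
  by rewrite /chi; case: eqVneq => _; rewrite ?normr0 ?normr_ge0.
split.
  split=> [//|x]; apply/RleP; rewrite /qform big1 // => i _.
  by rewrite big1 // => j _; rewrite /mzero; R_to_ring; rewrite mulr0 mul0r.
split=> //; split; first exact: is_M_chi_witness.
rewrite madd_chi_witness ?gt_eqF //; apply: pd_diag_part => i.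
exact: minv_diag_gt0.
Qed.

Lemma Jt_chi_witness delta l : pd S -> 0 < l ->
  Jt S delta l mzero (chi_witness l)
  = l * (delta - ln (mdet (diag_part (minv S))) - ln (mdet S)).
Proof.
move=> pdS l_gt0; rewrite /Jt (chi_id (is_M_chi_witness l pdS)).
by rewrite madd_chi_witness ?gt_eqF //; R_to_ring; congr (_ * _); ring.
Qed.

Lemma exists_Jt_lt0 (delta : R) : pd S -> 0 < delta -> delta < delta_max S ->
  exists l G T, C2 S l G T /\ Jt S delta l G T < 0.
Proof.
move=> pdS delta_gt0 delta_lt.
set D := diag_part (minv S).
have scale_ge0 : 0 <= abs_sum (minv S) * n%:R.
  by rewrite mulr_ge0 // sumr_ge0 // => i _; rewrite sumr_ge0.
pose l := (1 + abs_sum (minv S) * n%:R)^-1.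
have l_gt0 : 0 < l by rewrite invr_gt0; lra.
have small_l : l * (abs_sum (minv S) * n%:R) <= 1.
  by rewrite ler_pdivrMl ?mulr1; lra.
exists l, mzero, (chi_witness l); split; first exact: C2_chi_witness.
have detD_gt0 : 0 < mdet D.
  by rewrite mdet_diag_part prodr_gt0 // => i _; exact: minv_diag_gt0.
have delta_maxE : delta_max S = ln (mdet D * mdet S).
  by rewrite /delta_max msub_chi !mdetE mx_of_mmul det_mulmx.
have detDS_gt1 : 1 < mdet D * mdet S.
  by apply: ln_gt0; rewrite -delta_maxE; apply: lt_trans delta_lt.
have detS_gt0 : 0 < mdet S by rewrite -(pmulr_rgt0 _ detD_gt0); lra.
rewrite delta_maxE ln_mult in delta_lt; try exact/RltP.
by rewrite Jt_chi_witness // pmulr_rlt0 //; move: delta_lt; R_to_ring; lra.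
Qed.

End Objective.

Lemma vanishing_floor_not_eventually_lt (lam f : nat -> R) (F v : R) :
  v < 0 -> Un_cv lam 0 -> (forall k, - (lam k * F) <= f k) ->
  ~ (forall r, v < r -> exists N, forall k, (N <= k)%N -> f k < r).
Proof.
move=> v_lt0 lam0 f_ge eventually_lt.
have [N f_lt] := eventually_lt (v / 2) ltac:(lra).
have lamF0 : Un_cv (fun k => lam k * F) 0.
  rewrite -(Rmult_0_l F); apply: CV_mult => // e e_gt0.
  by exists 0%N => k _; rewrite /R_dist Rminus_diag Rabs_R0.
have [|N' lamF_small] := lamF0 (- v / 2); first by apply/RltP; rewrite R0E; lra.
pose k := maxn N N'.
have := f_ge k; have := f_lt k (leq_maxl N N').
move: (lamF_small k (ssrnat.leP (leq_maxr N N'))).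
rewrite /R_dist Rminus_0_r RabsE => /RltP /(le_lt_trans (ler_norm _)); lra.
Qed.

Local Open Scope R_scope.

Theorem lemma1 (n : nat) (S : Mat n) (delta : R)
  (HS : pd S) (Hd0 : 0 < delta) (Hd1 : delta < delta_max S)
  (lam : nat -> R) (Gam Th : nat -> Mat n)
  (HC : forall k, C2 S (lam k) (Gam k) (Th k))
  (Hlim : Un_cv lam 0) :
  ~ infimizing S delta lam Gam Th.
Proof.
move=> infimizing_lam; move/RltP: Hd0 => delta_gt0; move/RltP: Hd1 => delta_lt.
have [l [G [T [C2_lGT Jt_lt0]]]] := exists_Jt_lt0 HS delta_gt0 delta_lt.
apply: (vanishing_floor_not_eventually_lt Jt_lt0 Hlim (fun k => Jt_ge (ltW delta_gt0) (HC k))).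
move=> r Jt_lt_r; have [|N Jt_lt] := infimizing_lam r.
  by exists l, G, T; split=> //; apply/RltP.
by exists N => k /Jt_lt /RltP.
Qed.
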